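(* Let $n\ge1$ and let $\phi,\theta\in S_n$ be $x$--$y$ equivalent. Then the cycle graphs $Gr(\phi)$ and $Gr(\theta)$ have the same number of alternating cycles.
   Context: Permutations are written in one-line notation $\phi=\langle\phi_1\dots\phi_n\rangle$; set $\phi_0=0$. The big black cycle $\phi^{\cdot}$ is the $(n+1)$-cycle on $\{0,\dots,n\}$ with $\phi^{\cdot}(\phi_i)=\phi_{i-1}$ for $1\le i\le n$ and $\phi^{\cdot}(0)=\phi_n$, i.e. $\phi^{\cdot}=(0,\phi_n,\dots,\phi_1)$. Write $a\to b$ when $\phi^{\cdot}(a)=b$. Each $(n+1)$-cycle $(0,c_n,\dots,c_1)$ is the big black cycle of the unique permutation $\langle c_1\dots c_n\rangle$. Cycle graph $Gr(\phi)$: vertices $0,\dots,n$; black edges $a\to\phi^{\cdot}(a)$; grey edges $v\dashrightarrow v+1\pmod{n+1}$. Its edges decompose uniquely into alternating cycles, obtained by following a black edge and then a grey edge. The number of alternating cycles equals the number of cycles, fixed points included, of the map $v\mapsto\phi^{\cdot}(v)+1\pmod{n+1}$. $x$--$y$ exchange operation, for $x,y\in\{0,\dots,n\}$, with $x+1$ read as $0$ when $x=n$: if $x+1\to y$ in $\phi^{\cdot}$, remove $y$ from its place immediately after $x+1$ and reinsert it immediately before $x$. The resulting cycle is $\theta^{\cdot}$. If $y=x$, or if $x+1\to y\to x$ already holds, nothing changes. $x$--$y$ cyclic operation: if $\phi^{\cdot}$ contains $x+1\to y\to x$ (for $x=n$: $0\to y\to n$), relabel the entries of $\phi^{\cdot}$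 to obtain $\theta^{\cdot}$ as follows. If $x<n$ and $y>x+1$, replace $x+1$ by $y-1$ and each $t$ with $x+2\le t\le y-1$ by $t-1$. If $y<x$, replace $x$ by $y+1$ and each $t$ with $y+1\le t\le x-1$ by $t+1$. Two permutations are $x$--$y$ equivalent if they are related by the equivalence relation on $S_n$ generated by all $x$--$y$ exchange operations and all $x$--$y$ cyclic operations, over all $x,y$. Concretely, this means there is a finite sequence of permutations joining them in which each consecutive pair is related, in one direction or the other, by a single such operation. *)

From Stdlib Require Import Relations.
From mathcomp Require Import all_boot all_fingroup.
Set Implicit Arguments. Unset Strict Implicit. Unset Printing Implicit Defensive.

(* A permutation phi in S_n is represented by p : 'S_n (a permutation of
   'I_n = {0..n-1}); its one-line notation is <phi_1 ... phi_n> with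
   phi_i = (p (i-1)).+1, so that the values range over {1..n}. *)
Definition oneline n (p : 'S_n) : seq nat := [seq (p i).+1 | i <- enum 'I_n].

(* The big black cycle (0, phi_n, ..., phi_1), written as the list of its
   elements in arrow order:  a -> b  iff b follows a cyclically. *)
Definition arrows n (p : 'S_n) : seq nat := 0 :: rev (oneline p).

Definition black n (p : 'S_n) (a : nat) : nat := next (arrows p) a.

Definition succn n (x : nat) : nat := if x == n then 0 else x.+1.

(* x--y exchange operation: x+1 -> y; remove y from its place right after
   x+1 and reinsert it immediately before x.  Cycles are lists up to rotation. *)
Definition exch_op n (phi theta : 'S_n) : Prop :=
  exists (x y : nat) (r1 r2 : seq nat) (k k' : nat),
    x <= n /\
    arrows phi = rot k (succn n x :: y :: r1 ++ x :: r2) /\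
    arrows theta = rot k' (succn n x :: r1 ++ y :: x :: r2).

Definition cyc_relabel n (x y t : nat) : nat :=
  if (x < n) && (x.+1 < y) then
    (if t == x.+1 then y.-1 else if (x.+2 <= t) && (t <= y.-1) then t.-1 else t)
  else if y < x then
    (if t == x then y.+1 else if (y.+1 <= t) && (t <= x.-1) then t.+1 else t)
  else t.

Definition cyc_op n (phi theta : 'S_n) : Prop :=
  exists x y : nat,
    x <= n /\ black phi (succn n x) = y /\ black phi y = x /\
    arrows theta = map (cyc_relabel n x y) (arrows phi).

Definition xy_equiv n : relation 'S_n :=
  clos_refl_sym_trans 'S_n (fun phi theta => exch_op phi theta \/ cyc_op phi theta).

Definition altmap n (p : 'S_n) (v : 'I_n.+1) : 'I_n.+1 :=
  inord ((black p v).+1 %% n.+1).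

(* Number of alternating cycles of Gr(phi) = number of cycles (fixed points
   included) of altmap, i.e. the number of its orbits. *)
Definition n_alt_cycles n (p : 'S_n) : nat :=
  #|[set [set u | fconnect (altmap p) v u] | v : 'I_n.+1]|.

From Pilot Require Import Defs.
From mathcomp Require Import all_boot all_fingroup zify.
From Stdlib Require Import Lia.
Set Implicit Arguments. Unset Strict Implicit. Unset Printing Implicit Defensive.

(* Both operations change the map f : v |-> phi^.(v) + 1 only by a 3-cycle.
   An exchange moving y from after x+1 to after c turns f into f o (x+1 y c),
   and f c = x + 1.  A cyclic operation relabels the big black cycle by a
   bijection rho that turns v |-> v + 1 into (a b c) o (v |-> v + 1), so the
   new map is conjugate to (a b c) o f, hence to f o (a b c), again with
   f c = a.  Finally, writing (a b c) = (a c)(a b), composing a permutation f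
   with f c = a by (a c) splits off the fixed point a, and composing with (a b)
   merges it back: the number of cycles is unchanged. *)

Section OrbitCount.
Variable T : finType.
Implicit Types f g : T -> T.

Definition n_orbits f := #|[set [set u | fconnect f v u] | v : T]|.

Lemma fconnect_iterP f x y : reflect (exists i, y = iter i f x) (fconnect f x y).
Proof.
apply: (iffP idP) => [|[i ->]]; last exact: fconnect_iter.
by rewrite fconnect_orbit => /trajectP[i _ ->]; exists i.
Qed.

Lemma eq_n_orbits f g : f =1 g -> n_orbits f = n_orbits g.
Proof.
move=> eq_fg; apply: eq_card => A.
by apply/imsetP/imsetP=> -[v _ ->]; exists v => //; apply/setP=> u;
  rewrite !inE (eq_fconnect eq_fg).
Qed.

Lemma n_orbits_conj f g (r : T -> T) :
  injective r -> (forall v, g (r v) = r (f v)) -> n_orbits g = n_orbits f.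
Proof.
move=> inj_r grE.
have iterE i v : iter i g (r v) = r (iter i f v) by elim: i => //= i ->.
have orbitE v : [set u | fconnect g (r v) u] = r @: [set u | fconnect f v u].
  apply/setP=> u; rewrite -[u](f_invF inj_r) mem_imset // !inE.
  by apply/fconnect_iterP/fconnect_iterP=> -[i Ei]; exists i;
    [apply: (inj_r); rewrite -iterE | rewrite iterE Ei].
rewrite /n_orbits -[RHS](card_imset _ (imset_inj inj_r)); apply: eq_card => A.
apply/imsetP/imsetP=> [[w _ ->]|[_ /imsetP[v _ ->] ->]].
  exists [set u | fconnect f (invF inj_r w) u]; first exact: imset_f.
  by rewrite -orbitE f_invF.
by exists (r v); rewrite ?orbitE.
Qed.

Lemma n_orbits_perm (s : {perm T}) : n_orbits s = #|porbits s|.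
Proof.
have orbitE v : [set u | fconnect s v u] = porbit s v.
  by apply/setP=> u; rewrite inE; apply/fconnect_iterP/porbitP=> -[i ->];
    exists i; rewrite permX.
by apply: eq_card => A; apply/imsetP/imsetP=> -[v _ ->]; exists v; rewrite ?orbitE.
Qed.

End OrbitCount.

Definition cycle3 (S : eqType) (a b c : S) (v : S) : S :=
  if v == a then b else if v == b then c else if v == c then a else v.

Lemma cycle3E (T : finType) (a b c : T) : a != b -> b != c -> a != c ->
  cycle3 a b c =1 tperm a c \o tperm a b.
Proof.
move=> ab bc ac v; rewrite /cycle3 /=.
case: (tpermP a b v) => [->|->|/eqP va /eqP vb]; rewrite ?eqxx.
- by rewrite tpermD // eq_sym.
- by rewrite eq_sym (negbTE ab) tpermL.
rewrite (negbTE va) (negbTE vb).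
by case: (tpermP a c v) => [/eqP|->|_ /eqP/negbTE->]; rewrite ?eqxx ?(negbTE va).
Qed.

(* Composing with (a b c) = (a c)(a b): as f c = a, the transposition (a c)
   splits the cycle through a and c, isolating a as a fixed point, and (a b)
   then merges this fixed point into the cycle of b. *)
Lemma n_orbits_comp_cycle3 (T : finType) (f : T -> T) (a b c : T) :
  injective f -> a != b -> b != c -> a != c -> f c = a ->
  n_orbits (f \o cycle3 a b c) = n_orbits f.
Proof.
move=> inj_f ab bc ac fc; pose s := perm inj_f.
pose s1 := (tperm a c * s)%g; pose s2 := (tperm a b * s1)%g.
have s2E : f \o cycle3 a b c =1 s2.
  by move=> v; rewrite /s2 /s1 !permM permE /= cycle3E.
have split_ac : #|porbits s1| + (a \notin porbit s c).*2 = #|porbits s| + (a != c).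
  exact: porbits_mul_tperm.
have merge_ab : #|porbits s2| + (a \notin porbit s1 b).*2 = #|porbits s1| + (a != b).
  exact: porbits_mul_tperm.
have a_s_c : a \in porbit s c.
  by rewrite -fc -(permE inj_f) -/s -[s c]/((s ^+ 1)%g c) -eq_porbit_mem porbit_perm.
have s1a : s1 a = a by rewrite permM tpermL permE.
have b_s1_a : a \notin porbit s1 b.
  have s1Xa i : (s1 ^+ i)%g a = a.
    by elim: i => [|i IHi]; rewrite ?perm1 // expgSr permM IHi s1a.
  rewrite porbit_sym; apply/negP=> /porbitP[i]; rewrite s1Xa => /eqP.
  by rewrite eq_sym (negbTE ab).
rewrite a_s_c b_s1_a ac ab /= in split_ac merge_ab.
rewrite (eq_n_orbits s2E) (@eq_n_orbits _ f s) => [|v]; last by rewrite permE.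
rewrite double0 addn0 in split_ac; rewrite split_ac -addnA in merge_ab.
by rewrite !n_orbits_perm; apply: addIn merge_ab.
Qed.

Local Notation succ := Defs.succn.

Ltac case_ifs := repeat match goal with |- context [if ?b then _ else _] =>
  lazymatch b with context [if _ then _ else _] => fail | _ => idtac end;
  let H := fresh "H" in destruct b eqn:H; [| move/negbT: H => H] end.
Ltac ifs_lia := rewrite ?/cyc_relabel ?/Defs.succn ?/cycle3; case_ifs; lia.

Lemma cyc_relabel_inj_up n x y : x < n -> x + 3 <= y -> injective (cyc_relabel n x y).
Proof. move=> ? ? u v; ifs_lia. Qed.

Lemma cyc_relabel_inj_down n x y : y + 2 <= x -> injective (cyc_relabel n x y).
Proof. move=> ? u v; ifs_lia. Qed.

Lemma leq_cyc_relabel n x y t : x <= n -> y <= n -> t <= n -> cyc_relabel n x y t <= n.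
Proof. move=> *; ifs_lia. Qed.

Lemma cyc_relabel_id n x y : ~~ ((x < n) && (x + 3 <= y)) -> ~~ (y + 2 <= x) ->
  cyc_relabel n x y =1 id.
Proof. move=> + + t; ifs_lia. Qed.

Lemma succ_cyc_relabel_up n x y t : x < n -> x + 3 <= y -> y <= n -> t <= n ->
  succ n (cyc_relabel n x y t) = cyc_relabel n x y (cycle3 x.+1 x.+2 y (succ n t)).
Proof. move=> *; ifs_lia. Qed.

Lemma succ_cyc_relabel_down n x y t : x <= n -> y + 2 <= x -> t <= n ->
  succ n (cyc_relabel n x y t) = cyc_relabel n x y (cycle3 y.+1 x (succ n x) (succ n t)).
Proof. move=> *; ifs_lia. Qed.

Lemma next_cat_cons (T : eqType) (s p t : seq T) v :
  uniq s -> s = p ++ v :: t -> next s v = head v (t ++ p).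
Proof.
move=> uniq_s s_eq; rewrite -(next_rot (size p) uniq_s) s_eq rot_size_cat /=.
by case: (t ++ p) => [|z w] /=; rewrite eqxx.
Qed.

Lemma next_move (T : eqType) (X y c : T) (q t : seq T) :
  uniq (X :: y :: rcons q c ++ t) ->
  forall v,
  next (X :: rcons q c ++ y :: t) v = next (X :: y :: rcons q c ++ t) (cycle3 X y c v).
Proof.
move=> uniq_old v.
have perm_old_new : perm_eq (X :: y :: rcons q c ++ t) (X :: rcons q c ++ y :: t).
  by rewrite perm_cons; apply/permPl; exact: (perm_catCA [:: y]).
have uniq_new : uniq (X :: rcons q c ++ y :: t) by rewrite -(perm_uniq perm_old_new).
rewrite /cycle3.
have [->|vX] := eqVneq v X.
  rewrite (next_cat_cons (p := [::]) (t := rcons q c ++ y :: t) uniq_new) //.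
  rewrite (next_cat_cons (p := [:: X]) (t := rcons q c ++ t) uniq_old) //.
  by case: q {uniq_old uniq_new perm_old_new}.
have [->|vy] := eqVneq v y.
  rewrite (next_cat_cons (p := X :: rcons q c) (t := t) uniq_new) //.
  rewrite (next_cat_cons (p := [:: X, y & q]) (t := t) uniq_old) /= ?cat_rcons //.
  by case: t {uniq_old uniq_new perm_old_new}.
have [->|vc] := eqVneq v c.
  by rewrite (next_cat_cons (p := X :: q) (t := y :: t) uniq_new) /= ?eqxx ?cat_rcons.
have [v_old|v_out] := boolP (v \in X :: y :: rcons q c ++ t); last first.
  by rewrite !next_nth -(perm_mem perm_old_new) (negbTE v_out).
rewrite !inE mem_cat mem_rcons !inE (negbTE vX) (negbTE vy) (negbTE vc) /= in v_old.
case/orP: v_old => [/splitPr[q1 q2] | /splitPr[t1 t2]] in uniq_old uniq_new perm_old_new *.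
  rewrite (next_cat_cons (p := X :: q1) (t := rcons q2 c ++ y :: t) uniq_new); last first.
    by rewrite /= rcons_cat -catA.
  rewrite (next_cat_cons (p := [:: X, y & q1]) (t := rcons q2 c ++ t) uniq_old); last first.
    by rewrite /= rcons_cat -catA.
  by case: q2 {uniq_old uniq_new perm_old_new}.
rewrite (next_cat_cons (p := X :: rcons q c ++ y :: t1) (t := t2) uniq_new); last first.
  by rewrite /= -catA.
rewrite (next_cat_cons (p := [:: X, y & rcons q c ++ t1]) (t := t2) uniq_old) //.
  by case: t2 {uniq_old uniq_new perm_old_new}.
by rewrite /= -catA.
Qed.

Section AlternatingCycles.
Variable n : nat.
Implicit Types (p phi theta : 'S_n) (h : nat -> nat).

Lemma arrows_uniq p : uniq (arrows p).
Proof.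
rewrite /arrows /= rev_uniq mem_rev /oneline; apply/andP; split.
  by apply/negP=> /mapP[].
by rewrite map_inj_uniq ?enum_uniq // => i j [] /ord_inj /perm_inj.
Qed.

Lemma mem_arrows p v : (v \in arrows p) = (v <= n).
Proof.
rewrite /arrows inE mem_rev /oneline; case: v => [|v] //=.
apply/mapP/idP=> [[i _ [->]] | lt_v_n]; first exact: ltn_ord.
by exists ((p^-1)%g (Ordinal lt_v_n)); rewrite ?mem_enum ?permKV.
Qed.

Lemma leq_black p v : v <= n -> black p v <= n.
Proof. by rewrite -!(mem_arrows p) mem_next. Qed.

Lemma black_inj p : injective (black p).
Proof. exact: can_inj (prev_next (arrows_uniq p)). Qed.

Lemma leq_succ x : x <= n -> succ n x <= n.
Proof. move=> *; ifs_lia. Qed.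

Lemma succ_inj x y : x <= n -> y <= n -> succ n x = succ n y -> x = y.
Proof. ifs_lia. Qed.

Definition ordfun h (v : 'I_n.+1) : 'I_n.+1 := inord (h v).

Lemma val_ordfun h (v : 'I_n.+1) : h v <= n -> val (ordfun h v) = h v.
Proof. exact: inordK. Qed.

Lemma ordfun_inj h : injective h -> (forall v, v <= n -> h v <= n) -> injective (ordfun h).
Proof.
move=> inj_h h_le u v /(congr1 val).
by rewrite !val_ordfun ?h_le ?leq_ord // => /inj_h /val_inj.
Qed.

Lemma ordfun_cycle3 a b c : a <= n -> b <= n -> c <= n ->
  ordfun (cycle3 a b c) =1 cycle3 (inord a) (inord b) (inord c).
Proof.
move=> a_le b_le c_le v.
have eq_inord z : z <= n -> (v == inord z) = (val v == z).
  by move=> z_le; rewrite -val_eqE /= inordK.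
by rewrite /ordfun /cycle3 !eq_inord //; do !case: ifP => _ //; exact: inord_val.
Qed.

Lemma val_altmap p v : val (altmap p v) = succ n (black p v).
Proof.
have := leq_black p (leq_ord v); rewrite /altmap /= inordK ?ltn_mod // /Defs.succn.
by case: eqP => [->|*]; rewrite ?modnn // modn_small //; lia.
Qed.

Lemma altmap_inj p : injective (altmap p).
Proof.
move=> u v /(congr1 val); rewrite !val_altmap.
by move/succ_inj => /(_ (leq_black _ (leq_ord _)) (leq_black _ (leq_ord _)))
  /black_inj /val_inj.
Qed.

Lemma n_alt_cycles_comp_cycle3 p a b c : a <= n -> b <= n -> c <= n ->
  a != b -> b != c -> a != c -> succ n (black p c) = a ->
  n_orbits (altmap p \o ordfun (cycle3 a b c)) = n_alt_cycles p.
Proof.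
move=> a_le b_le c_le ab bc ac black_c.
have inord_neq z1 z2 : z1 <= n -> z2 <= n -> z1 != z2 -> (inord z1 : 'I_n.+1) != inord z2.
  by move=> ? ?; rewrite -val_eqE /= !inordK.
rewrite (@eq_n_orbits _ _ (altmap p \o cycle3 (inord a) (inord b) (inord c))); last first.
  by move=> v; rewrite /= ordfun_cycle3.
apply: n_orbits_comp_cycle3; rewrite ?inord_neq //; first exact: altmap_inj.
by apply: val_inj; rewrite val_altmap /= !inordK.
Qed.

Lemma leq_cycle3 a b c v : a <= n -> b <= n -> c <= n -> v <= n -> cycle3 a b c v <= n.
Proof. by rewrite /cycle3 => *; do !case: ifP. Qed.

Lemma n_alt_cycles_exch phi theta : exch_op phi theta -> n_alt_cycles theta = n_alt_cycles phi.
Proof.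
case=> x [y] [r1] [r2] [k] [k'] [_ [arrows_phi arrows_theta]].
set X := succ n x in arrows_phi arrows_theta.
have uniq_old : uniq (X :: y :: r1 ++ x :: r2).
  by rewrite -(rot_uniq k) -arrows_phi arrows_uniq.
have black_phi v : black phi v = next (X :: y :: r1 ++ x :: r2) v.
  by rewrite /black arrows_phi next_rot.
have black_theta v : black theta v = next (X :: r1 ++ y :: x :: r2) v.
  by rewrite /black arrows_theta next_rot // -(rot_uniq k') -arrows_theta arrows_uniq.
have old_le v : v \in X :: y :: r1 ++ x :: r2 -> v <= n.
  by rewrite -(mem_arrows phi) arrows_phi mem_rot.
case/lastP: r1 => [|q c] in arrows_phi arrows_theta uniq_old black_phi black_theta old_le *.
  by apply: eq_n_orbits => v; apply: val_inj; rewrite !val_altmap black_phi black_theta.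
have X_le : X <= n by apply: old_le; rewrite inE eqxx.
have y_le : y <= n by apply: old_le; rewrite !inE eqxx orbT.
have c_le : c <= n by apply: old_le; rewrite !inE mem_cat mem_rcons !inE eqxx !orbT.
have [X_fresh y_fresh] : X \notin y :: rcons q c ++ x :: r2 /\ y \notin rcons q c ++ x :: r2.
  by move: uniq_old => /= /and3P[].
have Xy : X != y by apply: contraNneq X_fresh => ->; exact: mem_head.
have Xc : X != c by apply: contraNneq X_fresh => ->; rewrite inE mem_cat mem_rcons mem_head orbT.
have yc : y != c by apply: contraNneq y_fresh => ->; rewrite mem_cat mem_rcons mem_head.
have black_c : succ n (black phi c) = X.
  by rewrite black_phi (next_cat_cons (p := [:: X, y & q]) (t := x :: r2) uniq_old) //= cat_rcons.
rewrite -(n_alt_cycles_comp_cycle3 X_le y_le c_le Xy yc Xc black_c).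
apply: eq_n_orbits => v; apply: val_inj.
by rewrite /= !val_altmap val_ordfun ?leq_cycle3 ?leq_ord // black_phi black_theta next_move.
Qed.

Lemma n_alt_cycles_relabel phi theta (rho : nat -> nat) a b c :
  injective rho -> (forall w, w <= n -> rho w <= n) ->
  arrows theta = map rho (arrows phi) ->
  a <= n -> b <= n -> c <= n -> a != b -> b != c -> a != c ->
  (forall w, w <= n -> succ n (rho w) = rho (cycle3 a b c (succ n w))) ->
  succ n (black phi c) = a -> n_alt_cycles theta = n_alt_cycles phi.
Proof.
move=> inj_rho rho_le arrows_theta a_le b_le c_le ab bc ac succ_rho black_c.
have black_theta w : black theta (rho w) = rho (black phi w).
  by rewrite /black arrows_theta next_map // arrows_uniq.
rewrite -(n_alt_cycles_comp_cycle3 a_le b_le c_le ab bc ac black_c).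
transitivity (n_orbits (ordfun (cycle3 a b c) \o altmap phi)).
  apply: (n_orbits_conj (r := ordfun rho)); first exact: ordfun_inj.
  move=> v; apply: val_inj.
  rewrite /= val_altmap !val_ordfun ?rho_le ?leq_cycle3 ?leq_succ ?leq_black ?leq_ord //.
  by rewrite black_theta val_altmap succ_rho ?leq_black ?leq_ord.
by symmetry; apply: (n_orbits_conj (r := altmap phi)); first exact: altmap_inj.
Qed.

Lemma n_alt_cycles_cyc phi theta : cyc_op phi theta -> n_alt_cycles theta = n_alt_cycles phi.
Proof.
case=> x [y] [x_le [black_succ_x [black_y arrows_theta]]].
have y_le : y <= n by rewrite -black_succ_x leq_black ?leq_succ.
have rho_le w : w <= n -> cyc_relabel n x y w <= n by exact: leq_cyc_relabel.
have [/andP[x_lt y_ge] | not_up] := boolP ((x < n) && (x + 3 <= y)).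
  apply: (n_alt_cycles_relabel (a := x.+1) (b := x.+2) (c := y)
    (cyc_relabel_inj_up x_lt y_ge) rho_le arrows_theta); try lia.
  - by move=> w w_le; apply: succ_cyc_relabel_up.
  - by rewrite black_y; ifs_lia.
have [y_lt | not_down] := boolP (y + 2 <= x).
  apply: (n_alt_cycles_relabel (a := y.+1) (b := x) (c := succ n x)
    (cyc_relabel_inj_down y_lt) rho_le arrows_theta); try ifs_lia.
  - by move=> w w_le; apply: succ_cyc_relabel_down.
  - by rewrite black_succ_x; ifs_lia.
apply: eq_n_orbits => v; apply: val_inj.
by rewrite !val_altmap /black arrows_theta (eq_map (cyc_relabel_id not_up not_down)) map_id.
Qed.

End AlternatingCycles.

Theorem mainTheorem3 (n : nat) (phi theta : 'S_n) :
  1 <= n -> xy_equiv phi theta -> n_alt_cycles phi = n_alt_cycles theta.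
Proof.
move=> _; elim=> [p q [/n_alt_cycles_exch | /n_alt_cycles_cyc] -> // | // |
                  p q _ -> // | p q r _ -> _ -> //].
Qed.
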